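(* Let $\Gamma$ be a finitely generated group with a fixed choice of generators $\bar{\epsilon}_1,\dots,\bar{\epsilon}_n$, let $\rho:\Gamma\to SL(2,\mathbb{C})$ be a representation and set $A=(A_1,\dots,A_n)=(\rho(\bar{\epsilon}_1),\dots,\rho(\bar{\epsilon}_n))$. For $1\le j,k,l\le n$ define $\sigma_{jk}(A)=\mathsf{tr}([A_j,A_k])-2$, where $[A_j,A_k]=A_jA_kA_j^{-1}A_k^{-1}$, and $\Delta_{jkl}(A)=(\mathsf{tr}(A_jA_kA_l)-\mathsf{tr}(A_lA_kA_j))^2$. Then $\rho$ is reducible if and only if $\sigma_{jk}(A)=\Delta_{jkl}(A)=0$ for every triple $1\le j,k,l\le n$.
   Context: A representation $\rho:\Gamma\to SL(2,\mathbb{C})$ is reducible if some proper nonzero subspace of $\mathbb{C}^2$ is invariant under $\rho(\Gamma)$. *)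

From HB Require Import structures.
From mathcomp Require Import all_boot all_order all_algebra.
From mathcomp Require Import reals.
From mathcomp Require Import complex.
Set Implicit Arguments. Unset Strict Implicit. Unset Printing Implicit Defensive.
Import Order.TTheory GRing.Theory Num.Theory.
Local Open Scope ring_scope.

Notation Cplx R := (complex (Real.sort R)).

Record group_laws (G : Type) (mul : G -> G -> G) (inv : G -> G) (e : G) : Prop := {
  gmulA : forall x y z, mul x (mul y z) = mul (mul x y) z;
  gmul1 : forall x, mul e x = x;
  gmulV : forall x, mul (inv x) x = e }.

Inductive generated (G : Type) (mul : G -> G -> G) (inv : G -> G) (e : G)
    (n : nat) (gens : 'I_n -> G) : G -> Prop :=
  | gen_one : generated mul inv e gens e
  | gen_gen : forall i, generated mul inv e gens (gens i)
  | gen_inv : forall x, generated mul inv e gens x -> generated mul inv e gens (inv x)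
  | gen_mul : forall x y, generated mul inv e gens x -> generated mul inv e gens y ->
                generated mul inv e gens (mul x y).

Definition SL2_rep (F : comNzRingType) (G : Type) (mul : G -> G -> G)
    (rho : G -> 'M[F]_2) : Prop :=
  (forall x, \det (rho x) = 1) /\ (forall x y, rho (mul x y) = rho x *m rho y).

Definition subspace (F : fieldType) (W : 'cV[F]_2 -> Prop) : Prop :=
  W 0 /\ (forall v w, W v -> W w -> W (v + w)) /\ (forall (a : F) v, W v -> W (a *: v)).

Definition reducible (F : fieldType) (G : Type) (rho : G -> 'M[F]_2) : Prop :=
  exists W : 'cV[F]_2 -> Prop,
    [/\ subspace W, (exists v, W v /\ v <> 0), (exists v, ~ W v)
      & forall (g : G) v, W v -> W (rho g *m v)].

Definition mxcomm (F : fieldType) (A B : 'M[F]_2) : 'M[F]_2 :=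
  A *m B *m invmx A *m invmx B.

Definition sigma_jk (F : fieldType) (A B : 'M[F]_2) : F := \tr (mxcomm A B) - 2.

Definition Delta_jkl (F : fieldType) (A B C : 'M[F]_2) : F :=
  (\tr (A *m B *m C) - \tr (C *m B *m A)) ^+ 2.

From HB Require Import structures.
From mathcomp Require Import all_boot all_order all_algebra.
From mathcomp Require Import reals complex.
From mathcomp Require Import ring.

Set Implicit Arguments. Unset Strict Implicit. Unset Printing Implicit Defensive.
Import Order.TTheory GRing.Theory Num.Theory.
Local Open Scope ring_scope.

(* A representation into SL(2, C) is reducible iff the images A_i of the
   generators have a common eigenvector v.  For determinant-one matrices
   sigma_jk = - det (A_j A_k - A_k A_j) and
   Delta_jkl = tr (A_j (A_k A_l - A_l A_k))^2.
   If v is a common eigenvector, every additive commutator N kills v, so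
   det N = 0; being also traceless, N squares to zero, so its image is the line
   of v, which A preserves: hence N A N = 0, and as N A N = tr (N A) N for a
   singular 2x2 matrix N, tr (A N) = 0.
   Conversely, if some commutator N is nonzero, it squares to zero and
   N A_i N = tr (N A_i) N = 0, so every A_i maps the line im N = ker N into
   itself.  If all A_i commute, an eigenline of a non-scalar A_p (C is
   algebraically closed) is invariant under all of them. *)

Lemma ord2_cases (i : 'I_2) : i = 0 \/ i = 1.
Proof. by case: i => [[|[|i]] Hi]; [left; apply: val_inj | right; apply: val_inj |]. Qed.

Section Matrix2.
Variable R : comPzRingType.

Definition mx2 (a b c d : R) : 'M[R]_2 :=
  \matrix_(i, j) if (i : nat) == 0 then (if (j : nat) == 0 then a else b)
                 else (if (j : nat) == 0 then c else d).

Definition cv2 (x y : R) : 'cV[R]_2 := \col_i if (i : nat) == 0 then x else y.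

Lemma mx2P (A : 'M[R]_2) : exists a b c d, A = mx2 a b c d.
Proof.
exists (A 0 0), (A 0 1), (A 1 0), (A 1 1); apply/matrixP => i j; rewrite mxE.
by case: (ord2_cases i) => ->; case: (ord2_cases j) => ->.
Qed.

Lemma cv2P (v : 'cV[R]_2) : exists x y, v = cv2 x y.
Proof.
exists (v 0 0), (v 1 0); apply/matrixP => i j; rewrite mxE (ord1 j).
by case: (ord2_cases i) => ->.
Qed.

Lemma mx2_eq a b c d a' b' c' d' :
  mx2 a b c d = mx2 a' b' c' d' <-> [/\ a = a', b = b', c = c' & d = d'].
Proof.
split=> [/matrixP eqA | [-> -> -> ->] //].
by move: (eqA 0 0) (eqA 0 1) (eqA 1 0) (eqA 1 1); rewrite !mxE.
Qed.

Lemma cv2_eq x y x' y' : cv2 x y = cv2 x' y' <-> x = x' /\ y = y'.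
Proof.
split=> [/matrixP eqv | [-> ->] //].
by move: (eqv 0 0) (eqv 1 0); rewrite !mxE.
Qed.

Lemma mx2_0 : 0 = mx2 0 0 0 0.
Proof.
apply/matrixP => i j; rewrite !mxE.
by case: (ord2_cases i) => ->; case: (ord2_cases j) => ->.
Qed.

Lemma cv2_0 : 0 = cv2 0 0.
Proof. by apply/matrixP => i j; rewrite !mxE; case: (ord2_cases i) => ->. Qed.

Lemma mx2_scalar k : k%:M = mx2 k 0 0 k.
Proof.
apply/matrixP => i j; rewrite !mxE.
by case: (ord2_cases i) => ->; case: (ord2_cases j) => ->.
Qed.

Lemma mx2_add a b c d a' b' c' d' :
  mx2 a b c d + mx2 a' b' c' d' = mx2 (a + a') (b + b') (c + c') (d + d').
Proof.
apply/matrixP => i j; rewrite !mxE.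
by case: (ord2_cases i) => ->; case: (ord2_cases j) => ->.
Qed.

Lemma mx2_opp a b c d : - mx2 a b c d = mx2 (- a) (- b) (- c) (- d).
Proof.
apply/matrixP => i j; rewrite !mxE.
by case: (ord2_cases i) => ->; case: (ord2_cases j) => ->.
Qed.

Lemma mx2_scale k a b c d : k *: mx2 a b c d = mx2 (k * a) (k * b) (k * c) (k * d).
Proof.
apply/matrixP => i j; rewrite !mxE.
by case: (ord2_cases i) => ->; case: (ord2_cases j) => ->.
Qed.

Lemma cv2_add x y x' y' : cv2 x y + cv2 x' y' = cv2 (x + x') (y + y').
Proof. by apply/matrixP => i j; rewrite !mxE; case: (ord2_cases i) => ->. Qed.

Lemma cv2_scale k x y : k *: cv2 x y = cv2 (k * x) (k * y).
Proof. by apply/matrixP => i j; rewrite !mxE; case: (ord2_cases i) => ->. Qed.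

Lemma mx2_mul a b c d a' b' c' d' :
  mx2 a b c d *m mx2 a' b' c' d' =
  mx2 (a * a' + b * c') (a * b' + b * d') (c * a' + d * c') (c * b' + d * d').
Proof.
apply/matrixP => i j; rewrite !mxE big_ord_recl big_ord1 !mxE /=.
by case: (ord2_cases i) => ->; case: (ord2_cases j) => ->.
Qed.

Lemma mx2_mulv a b c d x y : mx2 a b c d *m cv2 x y = cv2 (a * x + b * y) (c * x + d * y).
Proof.
apply/matrixP => i j; rewrite !mxE big_ord_recl big_ord1 !mxE /=.
by case: (ord2_cases i) => ->.
Qed.

Lemma mxtrace_mx2 a b c d : \tr (mx2 a b c d) = a + d.
Proof. by rewrite /mxtrace big_ord_recl big_ord1 !mxE. Qed.

Lemma det_mx2 a b c d : \det (mx2 a b c d) = a * d - b * c.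
Proof.
rewrite (expand_det_row _ 0) big_ord_recl big_ord1 /cofactor !det_mx11 !mxE /=.
rewrite /bump /=; ring.
Qed.

Definition mx2E := (mx2_add, mx2_opp, mx2_scale, mx2_mul, mx2_mulv, cv2_add, cv2_scale).

End Matrix2.

Section Lines.
Variable F : fieldType.
Implicit Types (K : 'M[F]_2) (u v w : 'cV[F]_2).

Definition line v : 'cV[F]_2 -> Prop := fun w => exists c, w = c *: v.

Definition det2cv v w : F := v 0 0 * w 1 0 - v 1 0 * w 0 0.

Lemma line_subspace v : subspace (line v).
Proof.
split; first by exists 0; rewrite scale0r.
split=> [_ _ [a ->] [b ->] | a _ [b ->]].
  by exists (a + b); rewrite scalerDl.
by exists (a * b); rewrite scalerA.
Qed.

Lemma line_proper v : exists w, ~ line v w.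
Proof.
have [x [y ->]] := cv2P v.
exists (if x == 0 then cv2 1 0 else cv2 0 1) => -[c].
rewrite cv2_scale; have [-> | nz_x] := eqVneq x 0 => /cv2_eq [e0 e1].
  by move/eqP: e0; rewrite mulr0 oner_eq0.
move/esym/eqP: e0; rewrite mulf_eq0 (negbTE nz_x) orbF => /eqP c0.
by move/eqP: e1; rewrite c0 mul0r oner_eq0.
Qed.

Lemma det2cv_eq0_line v w : v != 0 -> det2cv v w = 0 -> line v w.
Proof.
have [x [y ->]] := cv2P v; have [x' [y' ->]] := cv2P w.
rewrite /det2cv !mxE /= => nz_v /eqP; rewrite subr_eq0 => /eqP e.
have [x0 | nz_x] := eqVneq x 0.
  have nz_y : y != 0 by apply: contraNneq nz_v => y0; rewrite x0 y0 cv2_0.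
  exists (y' / y); rewrite cv2_scale; apply/cv2_eq; split; last by rewrite divfK.
  move/esym/eqP: e; rewrite x0 mul0r mulf_eq0 (negbTE nz_y) /= => /eqP ->.
  by rewrite mulr0.
exists (x' / x); rewrite cv2_scale; apply/cv2_eq; split; first by rewrite divfK.
by apply: (mulfI nz_x); rewrite e; field.
Qed.

Lemma cv2_cramer v u w : det2cv v u != 0 ->
  w = (det2cv w u / det2cv v u) *: v + (det2cv v w / det2cv v u) *: u.
Proof.
have [x [y ->]] := cv2P v; have [x' [y' ->]] := cv2P u; have [x'' [y'' ->]] := cv2P w.
rewrite /det2cv !mxE /= => nz; rewrite !cv2_scale cv2_add.
by apply/cv2_eq; split; field.
Qed.

Lemma subspace_sub_line (W : 'cV[F]_2 -> Prop) v w :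
  subspace W -> W v -> v != 0 -> ~ W w -> forall u, W u -> line v u.
Proof.
move=> [_ [WD WZ]] Wv nz_v Ww u Wu; apply: det2cv_eq0_line => //.
apply/eqP; apply: contraT => nz_vu; case: Ww.
by rewrite (cv2_cramer w nz_vu); apply: WD; apply: WZ.
Qed.

Lemma ker_mx2_line K v w : K != 0 -> v != 0 -> K *m v = 0 -> K *m w = 0 -> line v w.
Proof.
move=> nz_K nz_v Kv Kw; apply: det2cv_eq0_line => //.
apply/eqP; apply: contraNT nz_K; move: Kv Kw; rewrite /det2cv.
have [a [b [c [d ->]]]] := mx2P K; have [x [y ->]] := cv2P v; have [x' [y' ->]] := cv2P w.
rewrite !mxE /= !mx2_mulv cv2_0 => /cv2_eq [e1 e2] /cv2_eq [e3 e4] nz_D.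
have kill k : k * (x * y' - y * x') = 0 -> k = 0.
  by move/eqP; rewrite mulf_eq0 (negbTE nz_D) orbF => /eqP.
(* Each entry of K times det [v w] is a combination of the entries of K v and K w. *)
rewrite mx2_0; apply/eqP/mx2_eq; split; apply: kill.
- transitivity (y' * (a * x + b * y) - y * (a * x' + b * y')); first ring.
  by rewrite e1 e3 !mulr0 subrr.
- transitivity (x * (a * x' + b * y') - x' * (a * x + b * y)); first ring.
  by rewrite e1 e3 !mulr0 subrr.
- transitivity (y' * (c * x + d * y) - y * (c * x' + d * y')); first ring.
  by rewrite e2 e4 !mulr0 subrr.
- transitivity (x * (c * x' + d * y') - x' * (c * x + d * y)); first ring.
  by rewrite e2 e4 !mulr0 subrr.
Qed.

End Lines.

Section Nilpotent2.
Variable R : comPzRingType.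
Implicit Types N X Y : 'M[R]_2.

Lemma mx2_sqr_eq0 N : \tr N = 0 -> \det N = 0 -> N *m N = 0.
Proof.
have [a [b [c [d ->]]]] := mx2P N; rewrite mxtrace_mx2 det_mx2 mx2_mul => ht hd.
rewrite mx2_0; apply/mx2_eq; split.
- by transitivity (a * (a + d) - (a * d - b * c)); [ring | rewrite ht hd mulr0 subr0].
- by transitivity (b * (a + d)); [ring | rewrite ht mulr0].
- by transitivity (c * (a + d)); [ring | rewrite ht mulr0].
- by transitivity (d * (a + d) - (a * d - b * c)); [ring | rewrite ht hd mulr0 subr0].
Qed.

Lemma mx2_sandwich X Y : \det X = 0 -> X *m Y *m X = \tr (X *m Y) *: X.
Proof.
have [a [b [c [d ->]]]] := mx2P X; have [a' [b' [c' [d' ->]]]] := mx2P Y.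
rewrite det_mx2 !mx2_mul mxtrace_mx2 mx2_scale => hd; apply/mx2_eq; split.
- by transitivity ((a * a' + b * c' + (c * b' + d * d')) * a - (a * d - b * c) * d');
    [ring | rewrite hd mul0r subr0].
- by transitivity ((a * a' + b * c' + (c * b' + d * d')) * b + (a * d - b * c) * b');
    [ring | rewrite hd mul0r addr0].
- by transitivity ((a * a' + b * c' + (c * b' + d * d')) * c + (a * d - b * c) * c');
    [ring | rewrite hd mul0r addr0].
- by transitivity ((a * a' + b * c' + (c * b' + d * d')) * d - (a * d - b * c) * a');
    [ring | rewrite hd mul0r subr0].
Qed.

End Nilpotent2.

Lemma mxtrace_comm (R : comPzRingType) n (A B : 'M[R]_n) : \tr (A *m B - B *m A) = 0.
Proof. by rewrite raddfB /= mxtrace_mulC subrr. Qed.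

Lemma det_eq0_ker (F : fieldType) n (A : 'M[F]_n) (v : 'cV[F]_n) :
  v != 0 -> A *m v = 0 -> \det A = 0.
Proof.
move=> nz_v Av; apply/eqP; apply: contraNT nz_v => nz_det.
have unit_A : A \in unitmx by rewrite unitmxE unitfE.
by rewrite -[v]mul1mx -(mulVmx unit_A) -mulmxA Av mulmx0.
Qed.

Lemma mxcol_neq0 (R : nmodType) m n (A : 'M[R]_(m, n)) : A != 0 -> exists j, col j A != 0.
Proof.
move=> nz_A; apply/existsP; apply: contraNT nz_A; rewrite negb_exists => /forallP col_eq0.
apply/eqP/matrixP => i j; move/eqP/matrixP: (negbNE (col_eq0 j)) => /(_ i 0).
by rewrite !mxE.
Qed.

Section CommonEigenvector.
Variable F : fieldType.
Implicit Types (A B C N : 'M[F]_2) (v : 'cV[F]_2).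

Lemma comm_mulmx_line B C v :
  line v (B *m v) -> line v (C *m v) -> (B *m C - C *m B) *m v = 0.
Proof.
move=> [b Bv] [c Cv].
by rewrite mulmxBl -!mulmxA Cv Bv -!scalemxAr Bv Cv !scalerA mulrC subrr.
Qed.

Lemma mxtrace_mul_nil A N v : v != 0 -> N *m v = 0 -> \tr N = 0 -> \det N = 0 ->
  line v (A *m v) -> \tr (A *m N) = 0.
Proof.
move=> nz_v Nv trN detN [a Av].
have [-> | nz_N] := eqVneq N 0; first by rewrite mulmx0 mxtrace0.
have [j nz_w] := mxcol_neq0 nz_N; set w := col j N in nz_w *.
have NAw : N *m (A *m w) = \tr (A *m N) *: w.
  by rewrite /w colE !mulmxA mx2_sandwich // mxtrace_mulC -scalemxAl.
have [c wE] : line v w.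
  by apply: ker_mx2_line nz_N nz_v Nv _; rewrite /w colE mulmxA mx2_sqr_eq0 // mul0mx.
have NAw0 : N *m (A *m w) = 0 by rewrite wE -scalemxAr Av -!scalemxAr Nv !scaler0.
by move/eqP: NAw; rewrite NAw0 eq_sym scaler_eq0 (negbTE nz_w) orbF => /eqP.
Qed.

Lemma common_eigenvector_conditions n (M : 'I_n -> 'M[F]_2) v :
  v != 0 -> (forall i, line v (M i *m v)) ->
  forall j k l, \det (M j *m M k - M k *m M j) = 0 /\
                \tr (M j *m (M k *m M l - M l *m M k)) = 0.
Proof.
move=> nz_v Mv j k l; split; first exact: det_eq0_ker nz_v (comm_mulmx_line (Mv j) (Mv k)).
have Nv := comm_mulmx_line (Mv k) (Mv l).
exact: mxtrace_mul_nil nz_v Nv (mxtrace_comm _ _) (det_eq0_ker nz_v Nv) (Mv j).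
Qed.

Lemma nilpotent_common_eigenvector n (M : 'I_n -> 'M[F]_2) N :
  N != 0 -> \tr N = 0 -> \det N = 0 -> (forall i, \tr (M i *m N) = 0) ->
  exists2 v, v != 0 & forall i, line v (M i *m v).
Proof.
move=> nz_N trN detN trMN; have [j nz_v] := mxcol_neq0 nz_N.
exists (col j N) => // i; apply: ker_mx2_line nz_N nz_v _ _; rewrite colE !mulmxA.
  by rewrite mx2_sqr_eq0 // mul0mx.
by rewrite mx2_sandwich // mxtrace_mulC trMN scale0r mul0mx.
Qed.

End CommonEigenvector.

Section ClosedField.
Variable F : closedFieldType.

Lemma closed_eigenvector n (A : 'M[F]_n.+1) :
  exists l, exists2 v : 'cV_n.+1, v != 0 & A *m v = l *: v.
Proof.
have [l] : exists l, root (char_poly A^T) l by apply/closed_rootP; rewrite size_char_poly.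
rewrite -eigenvalue_root_char => /eigenvalueP [v vA nz_v].
exists l, v^T; first by rewrite trmx_eq0.
by rewrite -[A]trmxK -trmx_mul vA linearZ.
Qed.

Lemma commuting_common_eigenvector n (M : 'I_n -> 'M[F]_2) :
  (forall j k, M j *m M k = M k *m M j) ->
  exists2 v, v != 0 & forall i, line v (M i *m v).
Proof.
move=> comM; have [/forallP scalar_M | ] := boolP [forall i, is_scalar_mx (M i)].
  exists (delta_mx 0 0).
    by apply/eqP => /matrixP /(_ 0 0); rewrite !mxE => /eqP; rewrite oner_eq0.
  by move=> i; have /is_scalar_mxP [a ->] := scalar_M i; exists a; rewrite mul_scalar_mx.
rewrite negb_forall => /existsP [p /is_scalar_mxP not_scalar].
have [l [v nz_v Mv]] := closed_eigenvector (M p).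
have nz_K : M p - l%:M != 0.
  by apply: contra_notN not_scalar; rewrite subr_eq0 => /eqP; exists l.
have Kv : (M p - l%:M) *m v = 0 by rewrite mulmxBl Mv mul_scalar_mx subrr.
exists v => // i; apply: (ker_mx2_line nz_K nz_v Kv).
by rewrite mulmxA mulmxBl comM -scalar_mxC -mulmxBr -mulmxA Kv mulmx0.
Qed.

Lemma common_eigenvectorP n (M : 'I_n -> 'M[F]_2) :
  (exists2 v, v != 0 & forall i, line v (M i *m v)) <->
  (forall j k l, \det (M j *m M k - M k *m M j) = 0 /\
                 \tr (M j *m (M k *m M l - M l *m M k)) = 0).
Proof.
split=> [[v nz_v Mv] | cond]; first exact: common_eigenvector_conditions nz_v Mv.
have [/existsP [j /existsP [k nz_N]] | /existsPn comm] :=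
  boolP [exists j, exists k, M j *m M k - M k *m M j != 0].
  apply: (nilpotent_common_eigenvector nz_N (mxtrace_comm _ _) (cond j k j).1) => i.
  exact: (cond i j k).2.
apply: commuting_common_eigenvector => j k; apply/eqP; rewrite -subr_eq0.
by move/existsPn: (comm j) => /(_ k) /negbNE.
Qed.

End ClosedField.

Section SL2Traces.
Variable F : fieldType.
Implicit Types A B C : 'M[F]_2.

Lemma invmx_SL2 A : \det A = 1 -> invmx A = (\tr A)%:M - A.
Proof.
move=> detA; have unit_A : A \in unitmx by rewrite unitmxE detA unitr1.
have inv_A : A *m ((\tr A)%:M - A) = 1%:M.
  move: detA; have [a [b [c [d ->]]]] := mx2P A.
  rewrite det_mx2 mxtrace_mx2 !mx2_scalar !mx2E => detA.
  by apply/mx2_eq; split; rewrite -?detA; ring.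
by rewrite -[invmx A]mulmx1 -inv_A mulmxA mulVmx // mul1mx.
Qed.

Lemma sigma_jk_SL2 A B : \det A = 1 -> \det B = 1 ->
  sigma_jk A B = - \det (A *m B - B *m A).
Proof.
rewrite /sigma_jk /mxcomm => detA detB; rewrite !invmx_SL2 //; move: detA detB.
have [a [b [c [d ->]]]] := mx2P A; have [a' [b' [c' [d' ->]]]] := mx2P B.
rewrite !det_mx2 !mxtrace_mx2 !mx2_scalar !mx2E mxtrace_mx2 det_mx2 => detA detB.
have -> : 2 = 2 * (a * d - b * c) * (a' * d' - b' * c') :> F by rewrite detA detB !mulr1.
ring.
Qed.

Lemma Delta_jklE A B C : Delta_jkl A B C = \tr (A *m (B *m C - C *m B)) ^+ 2.
Proof. by rewrite /Delta_jkl mulmxBr raddfB /= [\tr (C *m B *m A)]mxtrace_mulC !mulmxA. Qed.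

End SL2Traces.

Section Representation.
Variables (F : fieldType) (G : Type) (mul : G -> G -> G) (inv : G -> G) (e : G).
Variable rho : G -> 'M[F]_2.

Lemma reducibleP : reducible rho <-> exists2 v, v != 0 & forall g, line v (rho g *m v).
Proof.
split=> [[W [W_sub [v [Wv /eqP nz_v]] [w Ww] W_inv]] | [v nz_v rho_v]].
  by exists v => // g; apply: subspace_sub_line W_sub Wv nz_v Ww _ (W_inv g v Wv).
exists (line v); split; [exact: line_subspace | | exact: line_proper | ].
  by exists v; split; [exists 1; rewrite scale1r | exact/eqP].
move=> g _ [c ->]; have [a rho_gv] := rho_v g.
by exists (c * a); rewrite -scalemxAr rho_gv scalerA.
Qed.

Hypotheses (laws : group_laws mul inv e) (rep : SL2_rep mul rho).

Lemma SL2_rep_one : rho e = 1%:M.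
Proof.
have [rep_det rep_mul] := rep.
have unit_e : rho e \in unitmx by rewrite unitmxE rep_det unitr1.
have idem_e : rho e *m rho e = rho e by rewrite -rep_mul (gmul1 laws).
by rewrite -[rho e]mul1mx -(mulVmx unit_e) -mulmxA idem_e.
Qed.

Lemma SL2_rep_inv x : rho (inv x) *m rho x = 1%:M.
Proof. by rewrite -(proj2 rep) (gmulV laws) SL2_rep_one. Qed.

Lemma generated_line n (gens : 'I_n -> G) v : v != 0 ->
  (forall i, line v (rho (gens i) *m v)) ->
  forall x, generated mul inv e gens x -> line v (rho x *m v).
Proof.
move=> nz_v gens_v x; elim=> [|i|y _ [c yv]|y z _ [c yv] _ [d zv]].
- by exists 1; rewrite SL2_rep_one mul1mx scale1r.
- exact: gens_v.
- have vE : v = c *: (rho (inv y) *m v).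
    by rewrite scalemxAr -yv mulmxA SL2_rep_inv mul1mx.
  have nz_c : c != 0 by apply: contraNneq nz_v => c0; rewrite vE c0 scale0r.
  by exists c^-1; rewrite {2}vE scalerA mulVf // scale1r.
- by exists (d * c); rewrite (proj2 rep) -mulmxA zv -scalemxAr yv scalerA.
Qed.

End Representation.

Theorem theorem1p2 (R : realType) (G : Type) (mul : G -> G -> G) (inv : G -> G) (e : G)
  (n : nat) (gens : 'I_n -> G) (rho : G -> 'M[Cplx R]_2) :
  group_laws mul inv e ->
  (forall x : G, generated mul inv e gens x) ->
  SL2_rep mul rho ->
  reducible rho <->
  (forall j k l : 'I_n,
     sigma_jk (rho (gens j)) (rho (gens k)) = 0 /\
     Delta_jkl (rho (gens j)) (rho (gens k)) (rho (gens l)) = 0).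
Proof.
move=> laws gen rep; apply: iff_trans (reducibleP rho) _.
have sigmaE j k := sigma_jk_SL2 (proj1 rep (gens j)) (proj1 rep (gens k)).
split=> [[v nz_v rho_v] j k l | cond].
  have [det0 tr0] := common_eigenvector_conditions nz_v (fun i => rho_v (gens i)) j k l.
  by rewrite sigmaE det0 oppr0 Delta_jklE tr0 expr0n.
have [v nz_v gens_v] : exists2 v, v != 0 & forall i, line v (rho (gens i) *m v).
  apply/(common_eigenvectorP (fun i => rho (gens i))) => j k l.
  have [sigma0 Delta0] := cond j k l.
  split; apply/eqP; first by rewrite -oppr_eq0 -sigmaE sigma0.
  by rewrite -sqrf_eq0 -Delta_jklE Delta0.
by exists v => // x; exact: (generated_line laws rep nz_v gens_v (gen x)).
Qed.
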